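(* Let $(p_i)$ be a generic sequence in $\mathbb{RP}^2$ with normalised lift $(e_i)$, $e_{i+3}=a_i(e_{i+1}+e_i)+b_ie_{i+2}$, and let $\tilde p_i=(p_i,p_{i+1})\cap(p_{i+2},p_{i+3})$ be the image sequence under the pentagram map. Then a lift of $(\tilde p_i)$ of the form $\tilde e_i=\alpha_i(e_i+e_{i+1})$ satisfies the normalisation $\tilde e_{i+3}=\tilde a_i(\tilde e_{i+1}+\tilde e_i)+\tilde b_i\tilde e_{i+2}$ if and only if $\alpha_i=c\,\frac{a_i}{b_i+1}$ for a nonzero constant $c$, and in that case $$\tilde a_i=\frac{a_{i+3}(b_{i+1}+1)}{b_{i+3}+1},\qquad \tilde b_i=\frac{b_i(b_{i+1}+1)(b_{i+2}+1)\,a_{i+3}}{(b_i+1)(b_{i+3}+1)\,a_{i+2}}.$$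
   Context: Genericity means all points and intersections involved are well defined, consecutive triples of vectors are linearly independent, and $b_i\neq-1$. $(p,q)$ denotes the line through $p$ and $q$. A lift $(e_i)$ is normalised if there are scalars $a_i,b_i$ with $e_{i+3}=a_i(e_{i+1}+e_i)+b_ie_{i+2}$ for all $i$. *)

(* Points of RP^2 are represented by nonzero vectors of R^3
   (row vectors 'rV[R]_3 over a real field R); sequences are indexed by int. *)
From HB Require Import structures.
From mathcomp Require Import all_boot all_order all_algebra.
Set Implicit Arguments. Unset Strict Implicit. Unset Printing Implicit Defensive.
Import Order.TTheory GRing.Theory Num.Theory.
Local Open Scope ring_scope.

Definition indep3 (R : fieldType) (u v w : 'rV[R]_3) : bool :=
  row_free (col_mx u (col_mx v w)).

Definition normalised (R : fieldType) (e : int -> 'rV[R]_3) (a b : int -> R) : Prop :=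
  forall i : int, e (i + 3) = a i *: (e (i + 1) + e i) + b i *: e (i + 2).

(* genericity: consecutive triples independent and b_i <> -1.
   (Well-definedness of the points p_i and of the intersections
   (p_i,p_{i+1}) /\ (p_{i+2},p_{i+3}) follows from the independence.) *)
Definition generic (R : fieldType) (e : int -> 'rV[R]_3) (b : int -> R) : Prop :=
  (forall i : int, indep3 (e i) (e (i + 1)) (e (i + 2))) /\
  (forall i : int, b i <> -1).

(* et is a lift of the image of (p_i) = ([e_i]) under the pentagram map:
   et_i is a nonzero vector representing the point
   (p_i, p_{i+1}) /\ (p_{i+2}, p_{i+3}), i.e. it lies in both planes
   span(e_i, e_{i+1}) and span(e_{i+2}, e_{i+3}). *)
Definition pentagram_lift (R : fieldType) (e et : int -> 'rV[R]_3) : Prop :=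
  forall i : int,
    et i != 0 /\
    (et i <= col_mx (e i) (e (i + 1)%R))%MS /\
    (et i <= col_mx (e (i + 2)%R) (e (i + 3)%R))%MS.

From HB Require Import structures.
From mathcomp Require Import all_boot all_order all_algebra ring.
Import Order.TTheory GRing.Theory Num.Theory.
Set Implicit Arguments. Unset Strict Implicit. Unset Printing Implicit Defensive.
Local Open Scope ring_scope.

(* Using the normalisation
   of (e_i) twice, the vector et_{i+3} - (At (et_{i+1} + et_i) + Bt et_{i+2})
   is an explicit combination of the basis e_i, e_{i+1}, e_{i+2}; so the
   normalisation of (et_i) at index i amounts to three scalar equations.
   An invertible change of these equations (its determinant is -(b_i + 1))
   puts them in the solved form
     At alpha_{i+1}           = alpha_{i+3} a_{i+1},
     At alpha_i (b_i + 1)     = alpha_{i+3} (b_{i+1} + 1) a_i,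
     Bt alpha_{i+2} (b_i + 1) = alpha_{i+3} (b_{i+1} + 1) b_i.
   Dividing the first two shows that the ratio alpha_i (b_i + 1) / a_i does
   not depend on i, which is the necessity of alpha_i = c a_i / (b_i + 1);
   conversely, for such alpha the solved form determines At and Bt uniquely,
   and the resulting formulas satisfy all three equations. *)

Lemma shift_invariant_const (T : Type) (g : int -> T) :
  (forall i, g i = g (i + 1)) -> forall i, g i = g 0.
Proof.
move=> g_shift.
have g_pos (n : nat) : g n%:Z = g 0.
  by elim: n => [//|n IHn]; rewrite -addn1 PoszD -g_shift.
have g_neg (n : nat) : g (- n%:Z) = g 0.
  elim: n => [|n IHn]; first by rewrite oppr0.
  by rewrite g_shift -addn1 PoszD opprD addrNK.
by case=> n; [exact: g_pos | rewrite NegzE; exact: g_neg].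
Qed.

Lemma indep3_coords0 (R : fieldType) (u v w : 'rV[R]_3) (x y z : R) :
  indep3 u v w -> x *: u + y *: v + z *: w = 0 -> [/\ x = 0, y = 0 & z = 0].
Proof.
move=> uvw_free comb0.
pose r : 'M[R]_(1, 1 + (1 + 1)) := row_mx x%:M (row_mx y%:M z%:M).
have r_ker : r *m col_mx u (col_mx v w) = 0 *m col_mx u (col_mx v w).
  by rewrite mul0mx /r !mul_row_col !mul_scalar_mx addrA.
move/eqP: (row_free_inj uvw_free r_ker).
rewrite !row_mx_eq0 => /andP[/eqP x0 /andP[/eqP y0 /eqP z0]].
by split; [move/matrixP: x0 | move/matrixP: y0 | move/matrixP: z0];
  move=> /(_ 0 0); rewrite !mxE.
Qed.

(* Two steps of a normalised recursion u_{k+3} = a_k (u_{k+1} + u_k) + b_k u_{k+2}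
   express the defect of the candidate relation for the scaled sums
   al_k (u_k + u_{k+1}) in the basis u_0, u_1, u_2.  The coordinates are
   written through the differences of the two sides of the three solved
   equations, which makes the equivalence with the solved form immediate. *)
Lemma sum_lift_defect (R : fieldType) (n : nat) (u0 u1 u2 u3 u4 : 'rV[R]_n)
    (a0 a1 b0 b1 al0 al1 al2 al3 At Bt : R) :
  b0 + 1 != 0 ->
  u3 = a0 *: (u1 + u0) + b0 *: u2 ->
  u4 = a1 *: (u2 + u1) + b1 *: u3 ->
  al3 *: (u3 + u4)
    - (At *: (al1 *: (u1 + u2) + al0 *: (u0 + u1)) + Bt *: (al2 *: (u2 + u3)))
  = (- ((At * al0 * (b0 + 1) - al3 * (b1 + 1) * a0)
        + a0 * (Bt * al2 * (b0 + 1) - al3 * (b1 + 1) * b0)) / (b0 + 1)) *: u0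
  + (- ((At * al0 * (b0 + 1) - al3 * (b1 + 1) * a0)
        + a0 * (Bt * al2 * (b0 + 1) - al3 * (b1 + 1) * b0)) / (b0 + 1)
     - (At * al1 - al3 * a1)) *: u1
  - ((At * al1 - al3 * a1) + (Bt * al2 * (b0 + 1) - al3 * (b1 + 1) * b0)) *: u2.
Proof.
by move=> b01 -> ->; apply/rowP => j; rewrite !mxE; field.
Qed.

Definition sum_lift (R : fieldType) (e : int -> 'rV[R]_3) (alpha : int -> R)
    (i : int) : 'rV[R]_3 :=
  alpha i *: (e i + e (i + 1)).

Section NormalisedSumLift.

Variables (R : fieldType) (e : int -> 'rV[R]_3) (a b : int -> R).
Hypothesis e_indep : forall i, indep3 (e i) (e (i + 1)) (e (i + 2)).
Hypothesis e_norm : normalised e a b.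
Hypothesis b1_neq0 : forall i, b i + 1 != 0.

(* The coefficient a_i cannot vanish: otherwise e_{i+1}, e_{i+2}, e_{i+3}
   would be dependent. *)
Lemma normalised_coef_neq0 i : a i != 0.
Proof.
apply/eqP => ai0.
have indep_next := e_indep (i + 1); rewrite -!addrA /= in indep_next.
have e3 := e_norm i; rewrite ai0 scale0r add0r in e3.
suff /(indep3_coords0 indep_next) [_ _ /eqP] :
    0 *: e (i + 1) + b i *: e (i + 2) + (-1) *: e (i + 3) = 0.
  by rewrite oppr_eq0 oner_eq0.
by rewrite e3 scale0r add0r scaleN1r subrr.
Qed.

Lemma sum_lift_stepP (alpha : int -> R) (At Bt : R) i :
  sum_lift e alpha (i + 3)
    = At *: (sum_lift e alpha (i + 1) + sum_lift e alpha i)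
      + Bt *: sum_lift e alpha (i + 2)
  <-> [/\ At * alpha (i + 1) = alpha (i + 3) * a (i + 1),
          At * alpha i * (b i + 1) = alpha (i + 3) * (b (i + 1) + 1) * a i
        & Bt * alpha (i + 2) * (b i + 1) = alpha (i + 3) * (b (i + 1) + 1) * b i].
Proof.
have i11 : i + 1 + 1 = i + 2 by rewrite -addrA.
have i12 : i + 1 + 2 = i + 3 by rewrite -addrA.
have i13 : i + 1 + 3 = i + 4 by rewrite -addrA.
have i21 : i + 2 + 1 = i + 3 by rewrite -addrA.
have i31 : i + 3 + 1 = i + 4 by rewrite -addrA.
have e4 := e_norm (i + 1); rewrite i11 i12 i13 in e4.
have defect := sum_lift_defect (alpha i) (alpha (i + 1)) (alpha (i + 2))
  (alpha (i + 3)) At Bt (b1_neq0 i) (e_norm i) e4.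
rewrite /sum_lift i11 i21 i31.
set d1 := At * alpha (i + 1) - _ in defect.
set d2 := At * alpha i * _ - _ in defect.
set d3 := Bt * alpha (i + 2) * _ - _ in defect.
split=> [rel | [h1 h2 h3]].
  (* the coordinates -(d2 + a_i d3)/(b_i + 1), that minus d1, and -(d1 + d3)
     all vanish, hence so do d1, d3 and d2 *)
  move: defect; rewrite rel subrr -scaleNr => /esym /(indep3_coords0 (e_indep i)).
  move=> [x0 y0 /eqP]; move: y0; rewrite x0 sub0r => /eqP; rewrite oppr_eq0 => /eqP d1_0.
  rewrite d1_0 add0r oppr_eq0 => /eqP d3_0; move: x0; rewrite d3_0 mulr0 addr0.
  move=> /eqP; rewrite mulf_eq0 invr_eq0 oppr_eq0 (negbTE (b1_neq0 i)) orbF => /eqP d2_0.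
  by split; apply/eqP; rewrite -subr_eq0; apply/eqP.
have d1_0 : d1 = 0 by rewrite /d1 h1 subrr.
have d2_0 : d2 = 0 by rewrite /d2 h2 subrr.
have d3_0 : d3 = 0 by rewrite /d3 h3 subrr.
apply/eqP; rewrite -subr_eq0 defect d1_0 d2_0 d3_0.
by rewrite !(mulr0, addr0, oppr0, mul0r, subr0, scale0r).
Qed.

Definition lift_ratio (alpha : int -> R) (i : int) : R := alpha i * (b i + 1) / a i.

(* Normalisability at index i makes the lift ratio invariant under i |-> i + 1:
   the first two solved equations give the same value alpha_{i+3} (b_{i+1} + 1) / At
   for both ratios. *)
Lemma lift_ratio_shift (alpha : int -> R) (At Bt : R) i :
  (forall j, alpha j != 0) ->
  sum_lift e alpha (i + 3)
    = At *: (sum_lift e alpha (i + 1) + sum_lift e alpha i)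
      + Bt *: sum_lift e alpha (i + 2) ->
  lift_ratio alpha i = lift_ratio alpha (i + 1).
Proof.
move=> alpha_nz /sum_lift_stepP [h1 h2 _].
have a_nz := normalised_coef_neq0.
have At_nz : At != 0.
  apply/eqP => At0; move/eqP: h1.
  by rewrite At0 mul0r eq_sym mulf_eq0 (negbTE (alpha_nz _)) (negbTE (a_nz _)).
rewrite /lift_ratio.
have -> : alpha i = alpha (i + 3) * (b (i + 1) + 1) * a i / (At * (b i + 1)).
  by rewrite -h2; field; rewrite At_nz b1_neq0.
have -> : alpha (i + 1) = alpha (i + 3) * a (i + 1) / At.
  by rewrite -h1; field.
by field; rewrite ?a_nz ?b1_neq0 ?At_nz.
Qed.

Lemma normalised_sum_lift_form (alpha At Bt : int -> R) :
  (forall j, alpha j != 0) ->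
  normalised (sum_lift e alpha) At Bt ->
  forall i, alpha i = lift_ratio alpha 0 * a i / (b i + 1).
Proof.
move=> alpha_nz norm i.
have ratio_const := shift_invariant_const (fun j => lift_ratio_shift alpha_nz (norm j)).
by rewrite -(ratio_const i) /lift_ratio; field; rewrite normalised_coef_neq0 b1_neq0.
Qed.

Lemma normalised_sum_liftP (c : R) (alpha At Bt : int -> R) :
  c != 0 -> (forall i, alpha i = c * a i / (b i + 1)) ->
  normalised (sum_lift e alpha) At Bt <->
  forall i,
    At i = a (i + 3) * (b (i + 1) + 1) / (b (i + 3) + 1) /\
    Bt i = b i * (b (i + 1) + 1) * (b (i + 2) + 1) * a (i + 3)
           / ((b i + 1) * (b (i + 3) + 1) * a (i + 2)).
Proof.
move=> c_nz alpha_def.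
have a_nz := normalised_coef_neq0.
have alpha_nz j : alpha j != 0.
  by rewrite alpha_def !mulf_neq0 ?invr_eq0 ?a_nz ?b1_neq0.
split=> [norm i | coefs i].
  have [h1 _ h3] := (sum_lift_stepP alpha (At i) (Bt i) i).1 (norm i).
  split.
    by rewrite -[At i](mulfK (alpha_nz (i + 1))) h1 !alpha_def; field;
      rewrite ?a_nz ?b1_neq0 ?c_nz.
  have nz2 : alpha (i + 2) * (b i + 1) != 0 by rewrite mulf_neq0 ?b1_neq0.
  by rewrite -[Bt i](mulfK nz2) mulrA h3 !alpha_def; field;
    rewrite ?a_nz ?b1_neq0 ?c_nz.
have [-> ->] := coefs i.
by apply/sum_lift_stepP; rewrite !alpha_def; split; field;
  rewrite ?a_nz ?b1_neq0 ?c_nz.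
Qed.

End NormalisedSumLift.

Theorem mainTheorem5 (R : realFieldType) (e : int -> 'rV[R]_3) (a b : int -> R)
  (alpha : int -> R) :
  generic e b ->
  normalised e a b ->
  pentagram_lift e (fun i => alpha i *: (e i + e (i + 1))) ->
  ((exists at_ bt : int -> R,
       normalised (fun i => alpha i *: (e i + e (i + 1))) at_ bt)
   <-> (exists2 c : R, c != 0 & forall i : int, alpha i = c * a i / (b i + 1)))
  /\
  (forall c : R, c != 0 -> (forall i : int, alpha i = c * a i / (b i + 1)) ->
   forall at_ bt : int -> R,
     normalised (fun i => alpha i *: (e i + e (i + 1))) at_ bt ->
     forall i : int,
       at_ i = a (i + 3) * (b (i + 1) + 1) / (b (i + 3) + 1) /\
       bt i = b i * (b (i + 1) + 1) * (b (i + 2) + 1) * a (i + 3)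
              / ((b i + 1) * (b (i + 3) + 1) * a (i + 2))).
Proof.
rewrite -/(sum_lift e alpha).
move=> [e_indep b_neq] e_norm lift.
have b1_neq0 i : b i + 1 != 0.
  by apply/eqP => /eqP; rewrite addr_eq0 => /eqP /(b_neq i).
have alpha_nz i : alpha i != 0.
  by have [+ _] := lift i; rewrite /sum_lift; apply: contraNneq => ->; rewrite scale0r.
have a_nz := normalised_coef_neq0 e_indep e_norm.
have coefsP := normalised_sum_liftP e_indep e_norm b1_neq0.
split; first split.
- move=> [At [Bt norm]]; exists (lift_ratio a b alpha 0).
    by rewrite !mulf_neq0 ?invr_eq0 ?a_nz ?b1_neq0.
  exact (normalised_sum_lift_form e_indep e_norm b1_neq0 alpha_nz norm).
- move=> [c c_nz alpha_def].
  exists (fun i => a (i + 3) * (b (i + 1) + 1) / (b (i + 3) + 1)).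
  exists (fun i => b i * (b (i + 1) + 1) * (b (i + 2) + 1) * a (i + 3)
                   / ((b i + 1) * (b (i + 3) + 1) * a (i + 2))).
  by apply/(coefsP _ _ _ _ c_nz alpha_def).
- by move=> c c_nz alpha_def At Bt /(coefsP _ _ _ _ c_nz alpha_def).
Qed.
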